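(* Let $(V,\eta)$ be as in the context. For any three states $s,s_1,s_2\in\mathcal S$ there exists a unique $\vec\beta\in T_s\mathcal S$ with $\eta(\vec\beta,\vec\beta)<1$ such that $B(s,\vec\beta)s_1=s_2$. It is the following rational function of $(s,s_1,s_2)$: $$\vec\beta(s,s_1,s_2)=\frac{\gamma_1+\gamma_2}{\gamma_1^2+\gamma_2^2+\gamma_{12}-1}\bigl(s_2-s_1-(\gamma_2-\gamma_1)s\bigr),$$ where $\gamma_1=-\eta(s,s_1)$, $\gamma_2=-\eta(s,s_2)$, $\gamma_{12}=-\eta(s_1,s_2)$. The corresponding boost $B(s,s_1,s_2):=B(s,\vec\beta(s,s_1,s_2))$ is likewise rational in $(s,s_1,s_2)$, namely, with $s_{21}:=s_2-s_1$, $$B(s,s_1,s_2)=\mathrm{id}_V+\frac{2(1-\gamma_{12})\,s\otimes s+s_{21}\otimes s_{21}+2\gamma_1\,s\otimes s_{21}-2\gamma_2\,s_{21}\otimes s}{1+2\gamma_1\gamma_2-\gamma_{12}}.$$ Moreover $\vec\beta$ is Lorentz equivariant: for every linear map $L:V\to V$ preserving $\eta$ and mapping $\mathcal S$ onto itself, $\vec\beta(Ls,Ls_1,Ls_2)=L\,\vec\beta(s,s_1,s_2)$.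
   Context: $V$ is a 4-dimensional real vector space with a symmetric non-degenerate bilinear form $\eta$ of signature $(-,+,+,+)$. The set of states of motion $\mathcal S$ is one fixed connected component of $\{v\in V:\eta(v,v)=-1\}$ (the future unit timelike vectors). For $s\in\mathcal S$, $T_s\mathcal S:=\{u\in V:\eta(u,s)=0\}$, on which $\eta$ is positive definite. Endomorphisms are written via $(u\otimes v)(w):=\eta(v,w)\,u$, and $u\wedge v:=u\otimes v-v\otimes u$. For $s\in\mathcal S$ and $\vec\beta\in T_s\mathcal S$ with $\beta^2:=\eta(\vec\beta,\vec\beta)<1$, $\beta>0$, put $\vec n=\vec\beta/\beta$, $\gamma=(1-\beta^2)^{-1/2}$; the boost relative to $s$ with velocity $\vec\beta$ is $$B(s,\vec\beta)=\mathrm{id}_V+(\gamma-1)(-s\otimes s+\vec n\otimes\vec n)+\beta\gamma(s\otimes\vec n-\vec n\otimes s),$$ and $B(s,0)=\mathrm{id}_V$. *)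

From HB Require Import structures.
From mathcomp Require Import all_boot all_order all_algebra.
Set Implicit Arguments. Unset Strict Implicit. Unset Printing Implicit Defensive.
Import Order.TTheory GRing.Theory Num.Theory.
Local Open Scope ring_scope.

(* (V, eta): a real vector space V with a symmetric bilinear form eta such that
   V has a basis e_0..e_3 (so dim V = 4) in which eta = diag(-1,1,1,1);
   this encodes "4-dimensional, symmetric, non-degenerate, signature (-,+,+,+)". *)
Definition minkowski_space (R : rcfType) (V : lmodType R) (eta : V -> V -> R) : Prop :=
  [/\ (forall (a : R) (u v w : V), eta (a *: u + v) w = a * eta u w + eta v w),
      (forall u v : V, eta u v = eta v u)
    & exists e : 'I_4 -> V,
        (forall v : V, exists! c : 'I_4 -> R, v = \sum_(i < 4) c i *: e i) /\
        (forall i j : 'I_4, eta (e i) (e j) =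
            if i == j then (if i == ord0 then -1 else 1) else 0)].

(* The fixed connected component S of {v | eta v v = -1}: the component
   containing the fixed unit timelike vector t, i.e. {v | eta v v = -1, eta v t < 0}. *)
Definition is_state (R : rcfType) (V : lmodType R) (eta : V -> V -> R) (t v : V) : Prop :=
  eta v v = -1 /\ eta v t < 0.

Definition tangent (R : rcfType) (V : lmodType R) (eta : V -> V -> R) (s u : V) : Prop :=
  eta u s = 0.

Definition tens (R : rcfType) (V : lmodType R) (eta : V -> V -> R) (u v w : V) : V :=
  eta v w *: u.

Definition boost (R : rcfType) (V : lmodType R) (eta : V -> V -> R) (s b : V) (w : V) : V :=
  if eta b b == 0 then w else
  let beta := Num.sqrt (eta b b) in
  let n := beta^-1 *: b in
  let g := (Num.sqrt (1 - beta ^+ 2))^-1 in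
  w + (g - 1) *: (- tens eta s s w + tens eta n n w)
    + (beta * g) *: (tens eta s n w - tens eta n s w).

Definition beta_formula (R : rcfType) (V : lmodType R) (eta : V -> V -> R) (s s1 s2 : V) : V :=
  let g1 := - eta s s1 in
  let g2 := - eta s s2 in
  let g12 := - eta s1 s2 in
  ((g1 + g2) / (g1 ^+ 2 + g2 ^+ 2 + g12 - 1)) *: (s2 - s1 - (g2 - g1) *: s).

Definition boost_formula (R : rcfType) (V : lmodType R) (eta : V -> V -> R) (s s1 s2 : V) (w : V) : V :=
  let g1 := - eta s s1 in
  let g2 := - eta s s2 in
  let g12 := - eta s1 s2 in
  let s21 := s2 - s1 in
  w + (1 + 2 * g1 * g2 - g12)^-1 *:
        ((2 * (1 - g12)) *: tens eta s s w + tens eta s21 s21 w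
         + (2 * g1) *: tens eta s s21 w - (2 * g2) *: tens eta s21 s w).

From HB Require Import structures.
From mathcomp Require Import all_boot all_order all_algebra.
From mathcomp Require Import ring lra.
Import Order.TTheory GRing.Theory Num.Theory.
Local Open Scope ring_scope.

(* Everything happens in the plane spanned by s and the tangent vector
   d21 = s2 - s1 - (g2 - g1) s, the projection of s2 - s1 onto T_s S.  For a
   tangent b, B(s, b) s1 - s1 is a combination of s and b whose s-component is
   g2 - g1; hence B(s, b) s1 = s2 forces d21 = g (g1 + g2) / (g + 1) b, and the
   relation g^2 (1 - eta(b, b)) = 1 for the Lorentz factor g of b then pins b
   down as beta(s, s1, s2).  Conversely, for this beta one finds
   1 - eta(beta, beta) = (qB / qbeta)^2 with qB = 1 + 2 g1 g2 - g12 and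
   qbeta = g1^2 + g2^2 + g12 - 1, both positive because the eta-orthogonal
   complement of a unit timelike vector is positive definite; so g = qbeta / qB
   and the boost formula becomes a field identity.  Equivariance holds because
   beta is built from eta and linear operations only. *)

Section SymmetricBilinear.
Local Set Implicit Arguments.
Local Unset Strict Implicit.
Variables (R : rcfType) (V : lmodType R) (eta : V -> V -> R).
Hypothesis etaDZl : forall (a : R) (u v w : V), eta (a *: u + v) w = a * eta u w + eta v w.
Hypothesis etaC : forall u v : V, eta u v = eta v u.

Lemma etaDl u v w : eta (u + v) w = eta u w + eta v w.
Proof. by rewrite -[u]scale1r etaDZl mul1r scale1r. Qed.

Lemma eta0l w : eta 0 w = 0.
Proof. by apply: (addrI (eta 0 w)); rewrite -etaDl !addr0. Qed.

Lemma etaZl a u w : eta (a *: u) w = a * eta u w.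
Proof. by rewrite -[a *: u]addr0 etaDZl eta0l addr0. Qed.

Lemma etaNl u w : eta (- u) w = - eta u w.
Proof. by rewrite -scaleN1r etaZl mulN1r. Qed.

Lemma etaDr u v w : eta w (u + v) = eta w u + eta w v.
Proof. by rewrite !(etaC w) etaDl. Qed.

Lemma eta0r w : eta w 0 = 0.
Proof. by rewrite etaC eta0l. Qed.

Lemma etaZr a u w : eta w (a *: u) = a * eta w u.
Proof. by rewrite !(etaC w) etaZl. Qed.

Lemma etaNr u w : eta w (- u) = - eta w u.
Proof. by rewrite !(etaC w) etaNl. Qed.

Lemma eta_suml (I : Type) (r : seq I) (F : I -> V) w :
  eta (\sum_(i <- r) F i) w = \sum_(i <- r) eta (F i) w.
Proof. exact: (big_morph (eta^~ w) (fun u v => etaDl u v w) (eta0l w)). Qed.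

Variables (n : nat) (e : 'I_n -> V) (sg : 'I_n -> R).
Hypothesis e_ortho : forall i j, eta (e i) (e j) = if i == j then sg i else 0.

Lemma eta_coord (c : 'I_n -> R) j : eta (\sum_i c i *: e i) (e j) = c j * sg j.
Proof.
rewrite eta_suml (bigD1 j) //= big1 ?addr0 => [|i /negbTE nij].
  by rewrite etaZl e_ortho eqxx.
by rewrite etaZl e_ortho nij mulr0.
Qed.

Lemma eta_coords (c d : 'I_n -> R) :
  eta (\sum_i c i *: e i) (\sum_j d j *: e j) = \sum_i sg i * c i * d i.
Proof.
rewrite etaC eta_suml; apply: eq_bigr => i _.
by rewrite etaZl etaC eta_coord; ring.
Qed.

End SymmetricBilinear.

Section MinkowskiSpace.
Local Set Implicit Arguments.
Local Unset Strict Implicit.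
Variables (R : rcfType) (V : lmodType R) (eta : V -> V -> R).

Lemma lorentz4_orthogonal (a c : 'I_4 -> R) :
  let sg i : R := if i == ord0 then -1 else 1 in
  \sum_i sg i * a i * a i = -1 -> \sum_i sg i * c i * a i = 0 ->
  0 <= \sum_i sg i * c i * c i /\
  (\sum_i sg i * c i * c i = 0 -> \sum_i c i ^+ 2 = 0).
Proof.
rewrite /= !big_ord_recl !big_ord0 /=.
set a0 := a ord0; set a1 := a _; set a2 := a _; set a3 := a _.
set c0 := c ord0; set c1 := c _; set c2 := c _; set c3 := c _.
rewrite !mulN1r !mul1r !addr0 => ha hca.
set S := c1 ^+ 2 + c2 ^+ 2 + c3 ^+ 2.
set Q := (c1 * a2 - c2 * a1) ^+ 2 + (c1 * a3 - c3 * a1) ^+ 2 + (c2 * a3 - c3 * a2) ^+ 2.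
have S_ge0 : 0 <= S by rewrite /S; do 2?[apply: addr_ge0]; exact: sqr_ge0.
have Q_ge0 : 0 <= Q by rewrite /Q; do 2?[apply: addr_ge0]; exact: sqr_ge0.
have a0_gt0 : 0 < a0 ^+ 2.
  have : 0 <= a1 ^+ 2 + a2 ^+ 2 + a3 ^+ 2 by do 2?[apply: addr_ge0]; exact: sqr_ge0.
  by rewrite !expr2; lra.
(* Lagrange's identity for the spatial parts *)
have key : a0 ^+ 2 * (S - c0 ^+ 2) = S + Q.
  have -> : a0 ^+ 2 * (S - c0 ^+ 2) = a0 ^+ 2 * S - (a0 * c0) ^+ 2 by ring.
  have -> : a0 ^+ 2 = 1 + (a1 ^+ 2 + a2 ^+ 2 + a3 ^+ 2) by rewrite !expr2; lra.
  have -> : a0 * c0 = a1 * c1 + a2 * c2 + a3 * c3 by lra.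
  by rewrite /S /Q; ring.
have -> : - c0 * c0 + (c1 * c1 + (c2 * c2 + c3 * c3)) = S - c0 ^+ 2 by rewrite /S; ring.
have -> : c0 ^+ 2 + (c1 ^+ 2 + (c2 ^+ 2 + c3 ^+ 2)) = 2 * S - (S - c0 ^+ 2).
  by rewrite /S; ring.
split=> [|q0]; first by rewrite -(pmulr_rge0 _ a0_gt0) key addr_ge0.
have S0 : S = 0 by move: key; rewrite q0 mulr0; lra.
by rewrite q0 S0 mulr0 subr0.
Qed.

Definition lorentz_factor (b : V) : R := (Num.sqrt (1 - eta b b))^-1.

Hypothesis hV : minkowski_space eta.

Let etaDZl : forall (a : R) (u v w : V), eta (a *: u + v) w = a * eta u w + eta v w.
Proof. by case: hV. Qed.

Let etaC : forall u v : V, eta u v = eta v u.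
Proof. by case: hV. Qed.

Let etaE := (etaDl etaDZl, etaDr etaDZl etaC, etaZl etaDZl, etaZr etaDZl etaC,
             etaNl etaDZl, etaNr etaDZl etaC, eta0l etaDZl, eta0r etaDZl etaC).

Lemma minkowski_eq u v : (forall z, eta u z = eta v z) -> u = v.
Proof.
case: hV => _ _ [e [basis ortho]] huv.
have [c [uvE _]] := basis (u - v).
apply/eqP; rewrite -subr_eq0 uvE; apply/eqP/big1 => j _.
have := eta_coord etaDZl ortho c j.
rewrite -uvE !etaE huv subrr => /esym/eqP.
have sg_neq0 : (if j == ord0 then -1 else 1 : R) != 0.
  by case: ifP; rewrite ?oppr_eq0 oner_eq0.
by rewrite mulf_eq0 (negbTE sg_neq0) orbF => /eqP ->; rewrite scale0r.
Qed.

Lemma orthogonal_timelike_posdef s u : eta s s = -1 -> eta u s = 0 ->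
  0 <= eta u u /\ (eta u u = 0 -> u = 0).
Proof.
case: hV => _ _ [e [basis ortho]].
have [a [-> _]] := basis s; have [c [-> _]] := basis u.
rewrite !(eta_coords etaDZl etaC ortho) => ha hca.
have [q_ge0 q0] := lorentz4_orthogonal ha hca.
split=> // /q0 c0; apply/big1 => i _.
have /eqP := psumr_eq0P (fun i _ => sqr_ge0 (c i)) c0 (i := i) isT.
by rewrite sqrf_eq0 => /eqP ->; rewrite scale0r.
Qed.

Lemma state_eta_lt0 t s s1 : eta t t = -1 ->
  is_state eta t s -> is_state eta t s1 -> eta s s1 < 0.
Proof.
move=> ht [hs hst] [hs1 hs1t].
set a := - eta s t; set a1 := - eta s1 t.
have a_gt0 : 0 < a by rewrite oppr_gt0.
have a1_gt0 : 0 < a1 by rewrite oppr_gt0.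
have v_orth : eta (a1 *: s - a *: s1) t = 0 by rewrite !etaE /a /a1; ring.
have [v_ge0 _] := orthogonal_timelike_posdef ht v_orth.
move: v_ge0; rewrite !etaE hs hs1 (etaC s1 s) => v_ge0.
have : 0 < a ^+ 2 + a1 ^+ 2 by rewrite addr_gt0 ?exprn_gt0.
have : 0 < a * a1 by rewrite mulr_gt0.
nra.
Qed.

Lemma lorentz_factor_gt0 b : eta b b < 1 -> 0 < lorentz_factor b.
Proof. by move=> hb; rewrite invr_gt0 sqrtr_gt0 subr_gt0. Qed.

Lemma lorentz_factorE b : eta b b < 1 -> lorentz_factor b ^+ 2 * (1 - eta b b) = 1.
Proof.
move=> hb; rewrite exprVn sqr_sqrtr ?subr_ge0 ?ltW // mulVf //.
by rewrite subr_eq0 eq_sym lt_eqF.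
Qed.

(* The coefficient (g - 1) / eta b b of the definition equals g^2 / (g + 1),
   which also covers b = 0. *)
Lemma boostE s b w : eta s s = -1 -> eta b s = 0 -> eta b b < 1 ->
  boost eta s b w =
  w + (lorentz_factor b * eta b w - (lorentz_factor b - 1) * eta s w) *: s
    + (lorentz_factor b ^+ 2 / (lorentz_factor b + 1) * eta b w
       - lorentz_factor b * eta s w) *: b.
Proof.
move=> hs hbs hb; have [bb_ge0 bb0] := orthogonal_timelike_posdef hs hbs.
have g_gt0 := lorentz_factor_gt0 hb; have gE := lorentz_factorE hb.
set g := lorentz_factor b in g_gt0 gE *.
have [/[dup] /bb0 b0 bb_eq0|bb_neq0] := eqVneq (eta b b) 0.
  have g1 : g = 1 by rewrite /g /lorentz_factor bb_eq0 subr0 sqrtr1 invr1.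
  by rewrite /boost bb_eq0 eqxx b0 g1 scaler0 addr0 etaE subrr mulr0 mul0r subr0 scale0r addr0.
rewrite /boost (negbTE bb_neq0) /=.
set beta := Num.sqrt (eta b b).
have beta_gt0 : 0 < beta by rewrite sqrtr_gt0 lt_neqAle eq_sym bb_neq0.
have beta2 : beta ^+ 2 = eta b b by rewrite sqr_sqrtr.
rewrite beta2 -/(lorentz_factor b) -/g.
have -> : g ^+ 2 / (g + 1) = (g - 1) / beta ^+ 2.
  have g1_neq0 : g + 1 != 0 by rewrite gt_eqF // ltr_wpDr.
  have beta2_neq0 : beta ^+ 2 != 0 by rewrite expf_neq0 // gt_eqF.
  rewrite -beta2 in gE; apply/eqP; rewrite eqr_div //; apply/eqP.
  by move: gE; rewrite mulrBr mulr1 => gE; rewrite mulrBl mulrDr; lra.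
apply: minkowski_eq => z; rewrite /tens !etaE.
by field; rewrite gt_eqF.
Qed.

Section Velocity.
Variables (t s s1 s2 : V).
Hypotheses (ht : eta t t = -1) (hs : is_state eta t s)
  (hs1 : is_state eta t s1) (hs2 : is_state eta t s2).

Local Notation g1 := (- eta s s1).
Local Notation g2 := (- eta s s2).
Local Notation g12 := (- eta s1 s2).
Local Notation d21 := (s2 - s1 - (g2 - g1) *: s).
Local Notation qbeta := (g1 ^+ 2 + g2 ^+ 2 + g12 - 1).
Local Notation qB := (1 + 2 * g1 * g2 - g12).
Local Notation beta := (beta_formula eta s s1 s2).

Let ss : eta s s = -1 := proj1 hs.
Let etaS := (etaC s1 s, etaC s2 s, etaC s2 s1, ss, proj1 hs1, proj1 hs2).

Lemma gamma1_gt0 : 0 < g1.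
Proof. by rewrite oppr_gt0 (state_eta_lt0 ht hs hs1). Qed.

Lemma gamma2_gt0 : 0 < g2.
Proof. by rewrite oppr_gt0 (state_eta_lt0 ht hs hs2). Qed.

Lemma d21_tangent : eta d21 s = 0.
Proof. by rewrite !etaE !etaS; ring. Qed.

Lemma qbeta_d21 : 2 * qbeta = (g1 + g2) ^+ 2 + eta d21 d21.
Proof. by rewrite !etaE !etaS; ring. Qed.

Lemma qbeta_gt0 : 0 < qbeta.
Proof.
have [dd_ge0 _] := orthogonal_timelike_posdef ss d21_tangent.
have : 0 < (g1 + g2) ^+ 2 by rewrite exprn_gt0 // addr_gt0 ?gamma1_gt0 ?gamma2_gt0.
by move: qbeta_d21; lra.
Qed.

Lemma qB_gt0 : 0 < qB.
Proof.
set v := g2 *: s1 + g1 *: s2 - (2 * g1 * g2) *: s.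
have v_tangent : eta v s = 0 by rewrite !etaE !etaS; ring.
have [vv_ge0 _] := orthogonal_timelike_posdef ss v_tangent.
have vvE : 2 * g1 * g2 * qB = eta v v + (g1 + g2) ^+ 2 by rewrite !etaE !etaS; ring.
have g_gt0 : 0 < 2 * g1 * g2 by rewrite !mulr_gt0 ?gamma1_gt0 ?gamma2_gt0.
have x_gt0 : 0 < (g1 + g2) ^+ 2 by rewrite exprn_gt0 // addr_gt0 ?gamma1_gt0 ?gamma2_gt0.
by rewrite -(pmulr_rgt0 _ g_gt0) vvE; lra.
Qed.

Lemma beta_formulaE : beta = ((g1 + g2) / qbeta) *: d21.
Proof. by []. Qed.

Lemma beta_formula_tangent : tangent eta s beta.
Proof. by rewrite /tangent beta_formulaE etaE d21_tangent mulr0. Qed.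

Lemma one_sub_eta_beta_formula : 1 - eta beta beta = (qB / qbeta) ^+ 2.
Proof.
have qbeta_neq0 : qbeta != 0 := lt0r_neq0 qbeta_gt0.
have dd : eta d21 d21 = 2 * qbeta - (g1 + g2) ^+ 2 by rewrite qbeta_d21; ring.
rewrite beta_formulaE !(etaZl etaDZl, etaZr etaDZl etaC) dd.
by field.
Qed.

Lemma beta_formula_subluminal : eta beta beta < 1.
Proof.
have : 0 < (qB / qbeta) ^+ 2 by rewrite exprn_gt0 // divr_gt0 ?qB_gt0 ?qbeta_gt0.
by rewrite -one_sub_eta_beta_formula subr_gt0.
Qed.

Lemma lorentz_factor_beta_formula : lorentz_factor beta = qbeta / qB.
Proof.
rewrite /lorentz_factor one_sub_eta_beta_formula sqrtr_sqr ger0_norm ?invf_div //.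
by rewrite divr_ge0 ?ltW ?qB_gt0 ?qbeta_gt0.
Qed.

Lemma boost_beta_formula w : boost eta s beta w = boost_formula eta s s1 s2 w.
Proof.
rewrite boostE ?beta_formula_subluminal //; last exact: beta_formula_tangent.
rewrite lorentz_factor_beta_formula beta_formulaE.
apply: minkowski_eq => z; rewrite /boost_formula /tens !etaE.
have qB_pos := qB_gt0; have qbeta_pos := qbeta_gt0.
by field; rewrite (gt_eqF qB_pos) (gt_eqF qbeta_pos) (gt_eqF (addr_gt0 qbeta_pos qB_pos)).
Qed.

Lemma boost_formula_s1 : boost_formula eta s s1 s2 s1 = s2.
Proof.
apply: minkowski_eq => z; rewrite /boost_formula /tens !etaE !etaS.
by field; rewrite gt_eqF // qB_gt0.
Qed.

Lemma beta_formula_uniq b : tangent eta s b -> eta b b < 1 ->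
  boost eta s b s1 = s2 -> b = beta.
Proof.
move=> hbs hb; rewrite boostE //.
have g_gt0 := lorentz_factor_gt0 hb; have gE := lorentz_factorE hb.
set g := lorentz_factor b in g_gt0 gE * => hB.
have g_neq0 : g != 0 by rewrite gt_eqF.
have g1_neq0 : g + 1 != 0 by rewrite gt_eqF // ltr_wpDr.
have etasb : eta s b = 0 by rewrite etaC.
have g2E : g2 = g * (g1 + eta b s1) by rewrite -hB !etaE !etaS etasb; ring.
set mu := g * (g1 + g2) / (g + 1).
have d21E : d21 = mu *: b.
  by apply: minkowski_eq => z; rewrite /mu g2E -{1}hB !etaE; field.
have bbE : eta b b = 1 - (g ^+ 2)^-1.
  apply: (@mulfI _ (g ^+ 2)); first by rewrite expf_neq0.
  by rewrite mulrBr mulr1 mulfV ?expf_neq0 //; move: gE; rewrite mulrBr mulr1; lra.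
have qbeta_mu : qbeta = (g1 + g2) * mu.
  apply: (@mulfI _ 2); first by rewrite pnatr_eq0.
  rewrite qbeta_d21 d21E !(etaZl etaDZl, etaZr etaDZl etaC) bbE /mu.
  by field; rewrite g1_neq0 g_neq0.
rewrite beta_formulaE d21E scalerA qbeta_mu mulrAC divff ?scale1r //.
by rewrite -qbeta_mu; exact: lt0r_neq0 qbeta_gt0.
Qed.

End Velocity.

End MinkowskiSpace.

Lemma beta_formula_isometry (R : rcfType) (V : lmodType R) (eta : V -> V -> R)
    (L : {linear V -> V}) (s s1 s2 : V) :
  (forall u v, eta (L u) (L v) = eta u v) ->
  beta_formula eta (L s) (L s1) (L s2) = L (beta_formula eta s s1 s2).
Proof.
by move=> hL; rewrite /beta_formula !hL [RHS]linearZ [in RHS]linearB [in RHS]linearB [in RHS]linearZ.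
Qed.

Theorem mainTheorem3 (R : rcfType) (V : lmodType R) (eta : V -> V -> R) (t : V)
  (hV : minkowski_space eta) (ht : eta t t = -1)
  (s s1 s2 : V) (hs : is_state eta t s) (hs1 : is_state eta t s1) (hs2 : is_state eta t s2) :
  [/\ exists! b : V, [/\ tangent eta s b, eta b b < 1 & boost eta s b s1 = s2],
      [/\ tangent eta s (beta_formula eta s s1 s2),
          eta (beta_formula eta s s1 s2) (beta_formula eta s s1 s2) < 1
        & boost eta s (beta_formula eta s s1 s2) s1 = s2],
      (forall w : V, boost eta s (beta_formula eta s s1 s2) w = boost_formula eta s s1 s2 w)
    & forall L : {linear V -> V},
        (forall u v : V, eta (L u) (L v) = eta u v) ->
        (forall v : V, is_state eta t v -> is_state eta t (L v)) ->
        (forall v : V, is_state eta t v -> exists2 u : V, is_state eta t u & L u = v) ->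
        beta_formula eta (L s) (L s1) (L s2) = L (beta_formula eta s s1 s2)].
Proof.
have beta_spec : [/\ tangent eta s (beta_formula eta s s1 s2),
    eta (beta_formula eta s s1 s2) (beta_formula eta s s1 s2) < 1
  & boost eta s (beta_formula eta s s1 s2) s1 = s2].
  split; first exact: (beta_formula_tangent hV s1 s2 hs).
    exact: (beta_formula_subluminal hV ht hs hs1 hs2).
  by rewrite (boost_beta_formula hV ht hs hs1 hs2) (boost_formula_s1 hV ht hs hs1 hs2).
split=> //.
- exists (beta_formula eta s s1 s2); split=> // b [hb hbb hB].
  exact/esym/(beta_formula_uniq hV ht hs hs1 hs2 hb hbb hB).
- exact: (boost_beta_formula hV ht hs hs1 hs2).
- by move=> L hL _ _; apply: beta_formula_isometry.
Qed.
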